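(* Let $\mathcal T=(T,\lambda)$ be a temporal oriented tree and let $G$ be its connectivity graph. For every set $S\subseteq V(T)$: $S$ is contained in the vertex set of some temporal path of $\mathcal T$ if and only if $S$ is contained in a clique of $G$.
   Context: A temporal digraph is a pair $(D,\lambda)$ with $D=(V,A)$ a finite digraph and $\lambda:A\to 2^{\{1,\dots,t_{\max}\}}$ giving the time-steps at which each arc is active. A temporal oriented tree $\mathcal T=(T,\lambda)$ is one whose underlying digraph $T$ is an orientation of a tree. A temporal path is a sequence $(v_1,v_2,t_1),\dots,(v_{k-1},v_k,t_{k-1})$ with pairwise distinct $v_i$, $\overrightarrow{v_iv_{i+1}}\in A$, $t_i\in\lambda(\overrightarrow{v_iv_{i+1}})$ and $t_1<\dots<t_{k-1}$; a single vertex is also a temporal path. Two vertices $u\ne v$ are temporally connected if there is a temporal path from $u$ to $v$ or from $v$ to $u$. The connectivity graph of $\mathcal T$ is the undirected graph $G$ with $V(G)=V(T)$ and $uv\in E(G)$ iff $u\neq v$ and $u,v$ are temporally connected. *)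

From mathcomp Require Import all_boot.
Set Implicit Arguments. Unset Strict Implicit. Unset Printing Implicit Defensive.

(* The time labelling lambda is lam : V -> V -> pred nat; lam u v is the set of
   time-steps of the arc u->v (only relevant when A u v). *)

Definition und (V : finType) (A : rel V) : rel V := fun u v => A u v || A v u.

Definition oriented_tree (V : finType) (A : rel V) : Prop :=
  [/\ (forall u, ~~ A u u),
      (forall u v, A u v -> ~~ A v u),
      (exists v : V, True),
      (forall u v, connect (und A) u v) &
      (forall s : seq V, uniq s -> 3 <= size s -> ~~ cycle (und A) s)].

Definition labelling (V : finType) (A : rel V) (tmax : nat)
  (lam : V -> V -> pred nat) : Prop :=
  forall u v t, A u v -> lam u v t -> (1 <= t <= tmax).

(* A temporal path starting at x: the steps p = [:: (v2,t1); ...; (vk,t_{k-1})].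
   Its vertex sequence is x :: map fst p. *)
Definition temporal_path (V : finType) (A : rel V) (lam : V -> V -> pred nat)
  (x : V) (p : seq (V * nat)) : bool :=
  [&& uniq (x :: map fst p),
      path (fun a b : V * nat => A a.1 b.1 && lam a.1 b.1 b.2) (x, 0) p &
      sorted ltn (map snd p)].

Definition tpath_vertices (V : finType) (x : V) (p : seq (V * nat)) : seq V :=
  x :: map fst p.

Definition treach (V : finType) (A : rel V) (lam : V -> V -> pred nat) (u v : V) : Prop :=
  exists p : seq (V * nat), temporal_path A lam u p /\ last u (map fst p) = v.

Definition conn_edge (V : finType) (A : rel V) (lam : V -> V -> pred nat) (u v : V) : Prop :=
  u <> v /\ (treach A lam u v \/ treach A lam v u).

Definition is_clique (V : finType) (E : V -> V -> Prop) (K : {set V}) : Prop :=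
  forall u v, u \in K -> v \in K -> u <> v -> E u v.

From mathcomp Require Import all_boot.
Set Implicit Arguments. Unset Strict Implicit. Unset Printing Implicit Defensive.

(* In an oriented tree a directed walk never repeats a vertex and is
   determined by its endpoints, so the vertices of a temporal path form the
   tree path between its ends; hence if x reaches u and w reaches y, a
   temporal path from x to y contains every directed walk from u to w.
   A clique is covered one vertex at a time.  A new vertex z, temporally
   connected to both ends u, w of the current path but not on it, cannot
   reach u while being reached from w (directed cycle), nor be reached from u
   while reaching w (z would lie on the path); so either z reaches u and the
   temporal path z ~> w contains the current one, or w reaches z and the
   temporal path u ~> z does. *)

Section UniquePaths.

Variables (T : eqType) (e : rel T).
Hypothesis e_sym : symmetric e.
Hypothesis e_acyclic : forall s : seq T, uniq s -> 3 <= size s -> ~~ cycle e s.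

Lemma uniq_path_unique a s1 s2 :
  path e a s1 -> path e a s2 -> uniq (a :: s1) -> uniq (a :: s2) ->
  last a s1 = last a s2 -> s1 = s2.
Proof.
elim: s1 a s2 => [|x s1 IH] a [|y s2] //=.
- by move=> _ _ _ /andP[aNs2 _] eq_last; move: aNs2; rewrite eq_last mem_last.
- by move=> _ _ /andP[aNs1 _] _ eq_last; move: aNs1; rewrite -eq_last mem_last.
move=> /andP[eax p1] /andP[eay p2] /andP[aNs1 u1] /andP[aNs2 u2] eq_last.
have [xy|xNy] := eqVneq x y; first by subst y; rewrite (IH x s2 p1 p2 u1 u2 eq_last).
(* Go from x along s1 to the common end and back along s2 to y; after
   removing loops, a :: x :: ... :: y is a cycle of length at least 3. *)
have w_path : path e x (s1 ++ rev (belast y s2)).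
  rewrite cat_path p1 /= eq_last rev_path.
  by apply: sub_path p2 => c d; rewrite e_sym.
have w_last : last x (s1 ++ rev (belast y s2)) = y.
  rewrite last_cat eq_last.
  by case: (s2) => //= z s2'; rewrite rev_cons last_rcons.
have w_sub : {subset s1 ++ rev (belast y s2) <= (x :: s1) ++ (y :: s2)}.
  move=> c; rewrite mem_cat mem_rev => /orP[c1|/mem_belast c2].
    by rewrite mem_cat inE c1 orbT.
  by rewrite mem_cat c2 orbT.
move: w_last w_sub; case/shortenP: w_path => p' p'_path p'_uniq p'_sub p'_last w_sub.
have aNp' : a \notin x :: p'.
  apply/negP => ap'; have : a \in (x :: s1) ++ (y :: s2).
    move: ap'; rewrite inE => /predU1P[->|/p'_sub/w_sub //]; exact: mem_head.
  by rewrite mem_cat (negbTE aNs1) (negbTE aNs2).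
have := @e_acyclic (a :: x :: p'); rewrite cons_uniq aNp' p'_uniq => /(_ isT).
case: p' p'_path {p'_uniq p'_sub w_sub aNp'} p'_last => [_ /= y_eq|z p'].
  by move: xNy; rewrite y_eq eqxx.
move=> /= /andP[exz p'_path] p'_last /(_ isT).
by rewrite eax exz rcons_path p'_path p'_last e_sym eay.
Qed.

End UniquePaths.

Section TemporalPaths.

Variables (V : finType) (A : rel V) (lam : V -> V -> pred nat).

Definition tconn (u v : V) := treach A lam u v \/ treach A lam v u.

Lemma tpath_path x p : temporal_path A lam x p -> path A x (map fst p).
Proof.
case/and3P=> _ p_path _; rewrite -[x]/((x, 0).1) path_map.
by apply: sub_path p_path => a b /andP[].
Qed.

Lemma tpath_connect x p :
  temporal_path A lam x p -> connect A x (last x (map fst p)).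
Proof. by move/tpath_path => p_path; apply/connectP; exists (map fst p). Qed.

Lemma treach_connect u v : treach A lam u v -> connect A u v.
Proof. by case=> p [/tpath_connect + <-]. Qed.

Lemma tpath_take x p n :
  temporal_path A lam x p -> temporal_path A lam x (take n p).
Proof.
case/and3P=> p_uniq p_path p_sorted; apply/and3P; split.
- by rewrite map_take -[x :: _]/(take n.+1 (x :: map fst p)) take_uniq.
- by move: p_path; rewrite -{1}(cat_take_drop n p) cat_path => /andP[].
- by rewrite map_take take_sorted.
Qed.

Lemma tpath_behead x a p :
  temporal_path A lam x (a :: p) -> temporal_path A lam a.1 p.
Proof.
case/and3P=> /= /andP[_ p_uniq] /andP[_ p_path] p_sorted; apply/and3P; split.
- exact: p_uniq.
- by case: p p_path {p_uniq p_sorted}.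
- exact: path_sorted p_sorted.
Qed.

Lemma tpath_treach x p v :
  temporal_path A lam x p -> v \in tpath_vertices x p -> treach A lam x v.
Proof.
move=> p_tpath vp; have [n <-] : exists n, last x (map fst (take n p)) = v.
  elim: p x {p_tpath} vp => [|a p IH] x; first by rewrite inE => /eqP->; exists 0.
  rewrite inE => /predU1P[->|/IH [n <-]]; first by exists 0.
  by exists n.+1.
by exists (take n p); split=> //; apply: tpath_take.
Qed.

Lemma tpath_tconn x p u v :
  temporal_path A lam x p -> u \in tpath_vertices x p ->
  v \in tpath_vertices x p -> u <> v -> tconn u v.
Proof.
elim: p x => [|a p IH] x p_tpath; first by rewrite !inE => /eqP-> /eqP->.
rewrite [u \in _]inE [v \in _]inE.
move=> /predU1P[->|up] /predU1P[->|vp] //.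
- by left; apply: tpath_treach p_tpath _; rewrite inE vp orbT.
- by right; apply: tpath_treach p_tpath _; rewrite inE up orbT.
- exact: IH (tpath_behead p_tpath) up vp.
Qed.

Section OrientedTree.

Hypothesis A_irr : forall u, ~~ A u u.
Hypothesis A_asym : forall u v, A u v -> ~~ A v u.
Hypothesis A_acyclic :
  forall s : seq V, uniq s -> 3 <= size s -> ~~ cycle (und A) s.

Lemma und_sym : symmetric (und A).
Proof. by move=> u v; rewrite /und orbC. Qed.

Lemma sub_und : subrel A (und A).
Proof. by move=> u v Auv; rewrite /und Auv. Qed.

Lemma closed_walk_nil x s : path A x s -> last x s = x -> s = [::].
Proof.
case: s => [//|y s] /= /andP[Axy /shortenP[p' p'_path p'_uniq _ p'_last]].
have p'_cycle : cycle A (y :: p') by rewrite /= rcons_path p'_path p'_last Axy.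
case: p' p'_path p'_uniq p'_cycle p'_last
  => [|z [|z' p']] p'_path p'_uniq p'_cycle /=.
- by move=> y_x; move: Axy; rewrite y_x (negbTE (A_irr x)).
- by move=> z_x; move: p'_path; rewrite z_x /= (negbTE (A_asym Axy)).
- by move=> _; move: (A_acyclic p'_uniq isT); rewrite (sub_cycle sub_und p'_cycle).
Qed.

Lemma path_uniq x s : path A x s -> uniq (x :: s).
Proof.
elim: s x => [//|y s IH] x xs_path.
have ys_uniq : uniq (y :: s) by apply: IH; case/andP: xs_path.
rewrite cons_uniq ys_uniq andbT; apply/negP => xys.
case/splitPr: xys xs_path => s1 s2.
rewrite -cat_rcons cat_path => /andP[/closed_walk_nil]; rewrite last_rcons.
by case: s1 => [|? ?] /(_ erefl).
Qed.

Lemma connect_antisym x y : connect A x y -> connect A y x -> x = y.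
Proof.
move=> /connectP[p p_path ->] /connectP[q q_path q_last].
have := @closed_walk_nil x (p ++ q).
rewrite cat_path p_path q_path last_cat -q_last => /(_ isT erefl).
by case: p {p_path q_path q_last}.
Qed.

Lemma path_unique x s1 s2 :
  path A x s1 -> path A x s2 -> last x s1 = last x s2 -> s1 = s2.
Proof.
move=> p1 p2; apply: (uniq_path_unique und_sym A_acyclic).
- exact: (sub_path sub_und p1).
- exact: (sub_path sub_und p2).
- exact: path_uniq p1.
- exact: path_uniq p2.
Qed.

Lemma path_connect_subset u t x t' :
  path A u t -> path A x t' -> connect A x u ->
  connect A (last u t) (last x t') -> {subset u :: t <= x :: t'}.
Proof.
move=> t_path t'_path /connectP[q q_path u_def] /connectP[r r_path r_last].
have -> : t' = q ++ t ++ r.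
  apply: path_unique t'_path _ _; last by rewrite !last_cat -u_def.
  by rewrite cat_path q_path -u_def cat_path t_path.
move=> c; rewrite inE => /predU1P[->|ct]; last by rewrite inE !mem_cat ct !orbT.
by rewrite u_def -cat_cons mem_cat mem_last.
Qed.

Definition covering_tpath (s : seq V) x p :=
  [/\ temporal_path A lam x p, x \in s, last x (map fst p) \in s
    & {subset s <= tpath_vertices x p}].

Lemma covering_tpath_cons s x p z :
  covering_tpath s x p -> {in s, forall y, y <> z -> tconn z y} ->
  exists y q, covering_tpath (z :: s) y q.
Proof.
rewrite /tpath_vertices; case=> p_tpath xs ws s_sub z_tconn.
set w := last x (map fst p) in ws *; have p_path := tpath_path p_tpath.
have [zp|zNp] := boolP (z \in x :: map fst p).
  exists x, p; split; rewrite ?inE ?xs ?ws ?orbT //.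
  by move=> c; rewrite inE => /predU1P[->|/s_sub].
have xz : x <> z by move=> xz; move: zNp; rewrite -xz mem_head.
have wz : w <> z by move=> wz; move: zNp; rewrite -wz mem_last.
case: (z_tconn x xs xz) => [zx|xz']; case: (z_tconn w ws wz) => [zw|wz'].
- case: zw => q [q_tpath q_last].
  exists z, q; split; rewrite ?mem_head ?q_last ?inE ?ws ?orbT //.
  move=> c; rewrite inE => /predU1P[->|/s_sub cp]; first exact: mem_head.
  apply: (path_connect_subset p_path (tpath_path q_tpath) (treach_connect zx)) cp.
  by rewrite q_last connect0.
- case: xz; apply: connect_antisym (treach_connect zx).
  exact: connect_trans (tpath_connect p_tpath) (treach_connect wz').
- case/negP: zNp; apply: (@path_connect_subset z [::] x _ isT p_path).
  + exact: treach_connect xz'.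
  + exact: treach_connect zw.
  + exact: mem_head.
- case: xz' => q [q_tpath q_last].
  exists x, q; split; rewrite ?inE ?xs ?q_last ?eqxx ?orbT //.
  move=> c; rewrite inE => /predU1P[->|/s_sub cp]; first by rewrite -q_last mem_last.
  apply: (path_connect_subset p_path (tpath_path q_tpath) (connect0 _ _)) cp.
  by rewrite q_last; apply: treach_connect.
Qed.

Lemma tconn_covering_tpath z s :
  {in z :: s &, forall a b, a <> b -> tconn a b} ->
  exists x p, covering_tpath (z :: s) x p.
Proof.
elim: s z => [|y s IH] z s_tconn.
  by exists z, [::]; split; rewrite ?mem_head.
have [x [p p_cover]] : exists x p, covering_tpath (y :: s) x p.
  by apply: IH; apply: sub_in2 s_tconn => c cs; rewrite inE cs orbT.
apply: covering_tpath_cons p_cover _ => c cs cz.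
by apply: s_tconn; [exact: mem_head | rewrite inE cs orbT | move=> zc; apply: cz].
Qed.

End OrientedTree.

End TemporalPaths.

Theorem mainTheorem4 (V : finType) (A : rel V) (tmax : nat)
  (lam : V -> V -> pred nat) :
  oriented_tree A -> labelling A tmax lam ->
  forall S : {set V},
    (exists (x : V) (p : seq (V * nat)),
        temporal_path A lam x p /\ {subset S <= tpath_vertices x p})
    <->
    (exists K : {set V}, is_clique (conn_edge A lam) K /\ S \subset K).
Proof.
case=> A_irr A_asym [v0 _] _ A_acyclic _ S; split.
  case=> x [p [p_tpath S_sub]]; exists [set v in tpath_vertices x p]; split.
    move=> u v; rewrite !inE => up vp uv; split=> //.
    exact: tpath_tconn p_tpath up vp uv.
  by apply/subsetP => v /S_sub; rewrite inE.
case=> K [K_clique SK]; case S_enum: (enum S) => [|z s].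
  by exists v0, [::]; split=> // v; rewrite -mem_enum S_enum.
have [|x [p [p_tpath _ _ S_sub]]] :=
  tconn_covering_tpath (lam := lam) A_irr A_asym A_acyclic (z := z) (s := s).
  move=> a b; rewrite -S_enum !mem_enum => aS bS ab.
  exact: (K_clique a b (subsetP SK a aS) (subsetP SK b bS) ab).2.
by exists x, p; split=> // v; rewrite -mem_enum S_enum => /S_sub.
Qed.
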